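(* Let $m \ge 2$ and $n \ge 1$ be integers, let $K_m = (V, E)$ be the complete graph on $m$ vertices, and let $E = E_1 \cup \dots \cup E_n$ be a partition of its edge set into $n$ parts. Define the load balance $\alpha = \min_{i} \frac{|E_i| \cdot n}{|E|}$ and the replication factor $RF = \frac{\sum_{i=1}^n |V(E_i)|}{|V|}$, where $V(E_i)$ denotes the set of vertices incident to at least one edge of $E_i$. Then $$RF \ge \sqrt{\alpha} \cdot \sqrt{n} \cdot \sqrt{\frac{m-1}{m}}.$$ *)

From mathcomp Require Import all_boot all_order all_algebra.
From mathcomp Require Import all_classical all_reals.
Set Implicit Arguments. Unset Strict Implicit. Unset Printing Implicit Defensive.
Import Order.TTheory GRing.Theory Num.Theory.
Local Open Scope ring_scope.

Definition Kedges (m : nat) : {set {set 'I_m}} := [set e : {set 'I_m} | #|e| == 2%N].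

(* A partition of the edge set into n (labelled) parts E_0, ..., E_{n-1} is
   given by an assignment of a part index to every edge. *)
Definition part (m n : nat) (f : {set 'I_m} -> 'I_n) (i : 'I_n) : {set {set 'I_m}} :=
  [set e in Kedges m | f e == i].

Definition part_vertices (m n : nat) (f : {set 'I_m} -> 'I_n) (i : 'I_n) : {set 'I_m} :=
  \bigcup_(e in part f i) e.

Definition load (R : realType) (m n : nat) (f : {set 'I_m} -> 'I_n) (i : 'I_n) : R :=
  (#|part f i|%:R * n%:R) / #|Kedges m|%:R.

Definition load_balance (R : realType) (m n : nat) (hn : (0 < n)%N)
  (f : {set 'I_m} -> 'I_n) : R :=
  \big[Num.min/load R f (Ordinal hn)]_(i < n) load R f i.

Definition replication_factor (R : realType) (m n : nat) (f : {set 'I_m} -> 'I_n) : R :=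
  (\sum_(i < n) #|part_vertices f i|%:R) / m%:R.

From mathcomp Require Import all_boot all_order all_algebra.
From mathcomp Require Import all_classical all_reals.
From mathcomp Require Import ring.
Import Order.TTheory GRing.Theory Num.Theory.
Local Open Scope ring_scope.

(* A part E_i consists of 2-subsets of V(E_i), so 2|E_i| <= |V(E_i)|^2.
   Since |E_i| >= alpha |E| / n and |E| = m(m-1)/2, every part spans at least
   sqrt(alpha m (m-1) / n) vertices; summing over the n parts and dividing by m
   gives RF >= (n/m) sqrt(alpha m (m-1) / n) = sqrt(alpha n (m-1) / m). *)

Lemma card_Kedges (m : nat) : #|Kedges m| = 'C(m, 2).
Proof. by rewrite /Kedges card_draws card_ord. Qed.

Lemma card_pairs_le_bin2 (T : finType) (P : {set {set T}}) :
  {in P, forall e : {set T}, #|e| = 2%N} -> (#|P| <= 'C(#|\bigcup_(e in P) e|, 2))%N.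
Proof.
move=> P2; rewrite -cards_draws; apply: subset_leq_card.
apply/fintype.subsetP => e Pe; rewrite inE P2 // eqxx andbT.
exact: finset.bigcup_sup.
Qed.

Lemma bin2_double_le_sqr (v : nat) : ('C(v, 2) * 2 <= v ^ 2)%N.
Proof.
rewrite mulnC -[2%N]/(1.+1) -mul_bin_diag bin1 expnS expn1.
by rewrite leq_mul2l leq_pred orbT.
Qed.

Lemma card_part_le (m n : nat) (f : {set 'I_m} -> 'I_n) (i : 'I_n) :
  (#|part f i| * 2 <= #|part_vertices f i| ^ 2)%N.
Proof.
apply: leq_trans (bin2_double_le_sqr _); rewrite leq_mul2r /=.
by apply: card_pairs_le_bin2 => e; rewrite inE /Kedges inE => /andP[/eqP].
Qed.

Lemma natr_card_Kedges (R : numDomainType) (m : nat) : (0 < m)%N ->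
  #|Kedges m|%:R * 2 = m%:R * (m%:R - 1) :> R.
Proof.
move=> m_gt0; rewrite card_Kedges -natrM mulnC -[2%N]/(1.+1) -mul_bin_diag bin1.
by rewrite natrM -subn1 natrB.
Qed.

Lemma load_mul_edges (R : realType) (m n : nat) (f : {set 'I_m} -> 'I_n) (i : 'I_n) :
  (2 <= m)%N ->
  load R f i * (m%:R * (m%:R - 1)) = (#|part f i| * 2 * n)%:R.
Proof.
move=> m_ge2; have m_gt0 : (0 < m)%N by apply: leq_trans m_ge2.
have E_gt0 : (0 < #|Kedges m|)%N by rewrite card_Kedges bin_gt0.
rewrite -natr_card_Kedges // /load !natrM; field.
by rewrite pnatr_eq0 -lt0n.
Qed.

Lemma load_balance_le_part_vertices (R : realType) (m n : nat) (hm : (2 <= m)%N)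
    (hn : (0 < n)%N) (f : {set 'I_m} -> 'I_n) (i : 'I_n) :
  load_balance R hn f * (m%:R * (m%:R - 1)) <= n%:R * #|part_vertices f i|%:R ^+ 2.
Proof.
have mm1_ge0 : 0 <= m%:R * (m%:R - 1) :> R.
  by rewrite mulr_ge0 ?ler0n // subr_ge0 ler1n (leq_trans _ hm).
have a_le : load_balance R hn f <= load R f i by apply: bigmin_le.
apply: le_trans (ler_wpM2r mm1_ge0 a_le) _.
rewrite load_mul_edges // mulrC -natrX -natrM ler_nat leq_mul2r.
by rewrite card_part_le orbT.
Qed.

Lemma sqr_sum_ge (R : rcfType) (n : nat) (v : 'I_n -> R) (c : R) :
  0 <= c -> (forall i, 0 <= v i) -> (forall i, c <= v i ^+ 2) ->
  n%:R ^+ 2 * c <= (\sum_i v i) ^+ 2.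
Proof.
move=> c_ge0 v_ge0 c_le.
have sqrt_le i : Num.sqrt c <= v i.
  by rewrite -[v i]ger0_norm // -sqrtr_sqr ler_sqrt ?sqr_ge0 //.
have sum_ge : n%:R * Num.sqrt c <= \sum_i v i.
  by rewrite -[n in n%:R]card_ord mulr_natl -sumr_const ler_sum.
rewrite -(sqr_sqrtr c_ge0) -exprMn lerXn2r // ?nnegrE ?sumr_ge0 //.
by rewrite mulr_ge0 ?ler0n ?sqrtr_ge0.
Qed.

Theorem theorem3 (R : realType) (m n : nat) (hm : (2 <= m)%N) (hn : (0 < n)%N)
  (f : {set 'I_m} -> 'I_n) :
  replication_factor R f >=
    Num.sqrt (load_balance R hn f) * Num.sqrt (n%:R) * Num.sqrt ((m%:R - 1) / m%:R).
Proof.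
set a := load_balance R hn f; set v := fun i => #|part_vertices f i|%:R : R.
have m_gt0 : (0 < m%:R :> R) by rewrite ltr0n (leq_trans _ hm).
have n_gt0 : (0 < n%:R :> R) by rewrite ltr0n.
have RF_ge0 : 0 <= replication_factor R f.
  by rewrite divr_ge0 ?ler0n // sumr_ge0.
have [a_le0 | a_gt0] := leP a 0.
  have /eqP -> : Num.sqrt a == 0 by rewrite sqrtr_eq0.
  by rewrite !mul0r.
rewrite -!sqrtrM ?mulr_ge0 ?ler0n ?(ltW a_gt0) //.
rewrite -[replication_factor R f]ger0_norm // -sqrtr_sqr ler_sqrt ?sqr_ge0 //.
set c := a * m%:R * (m%:R - 1) / n%:R.
have c_ge0 : 0 <= c.
  by rewrite !mulr_ge0 ?invr_ge0 ?ler0n ?(ltW a_gt0) // subr_ge0 ler1n (leq_trans _ hm).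
have c_le i : c <= v i ^+ 2.
  by rewrite ler_pdivrMr // -mulrA [v i ^+ 2 * _]mulrC load_balance_le_part_vertices.
have -> : a * n%:R * ((m%:R - 1) / m%:R) = (n%:R / m%:R) ^+ 2 * c.
  by rewrite /c; field; rewrite !gt_eqF.
rewrite /replication_factor !expr_div_n mulrAC ler_pM2r ?invr_gt0 ?exprn_gt0 //.
exact: sqr_sum_ge c_ge0 (fun i => ler0n _ _) c_le.
Qed.
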